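(* For $n\ge1$, $$\left|\Pi_n\wr C_2(1^11^1,1^12^2,1^22^1)\right|=\begin{cases}4&\text{if } n=2,\\ 2&\text{otherwise}.\end{cases}$$
   Context: For $n\ge0$ let $[n]=\{1,\dots,n\}$. A $2$-colored set partition of $[n]$ is a set partition of $[n]$ together with an assignment of a color from $\{1,2\}$ to each element; $\Pi_n\wr C_2$ is the set of these. For a set $S$ of patterns, $\Pi_n\wr C_2(S)$ is the set of such colored partitions avoiding every pattern in $S$ in the pattern sense. For the patterns used here: $\sigma$ contains $1^11^1$ iff two elements in the same block have the same color; $1^12^2$ iff there are $i<j$ in different blocks with $i$ colored $1$ and $j$ colored $2$; $1^22^1$ iff there are $i<j$ in different blocks with $i$ colored $2$ and $j$ colored $1$. *)

From mathcomp Require Import all_boot.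
Set Implicit Arguments. Unset Strict Implicit. Unset Printing Implicit Defensive.

(* [n] = {1,...,n} is modelled by 'I_n = {0,...,n-1} (order-preserving shift).
   Colors {1,2} are modelled by 'I_2: ord 0 = color 1, ord 1 = color 2.
   A 2-colored set partition of [n] is a pair (P, c) where P : {set {set 'I_n}}
   is a set partition of [n] (MathComp's [partition P [set: 'I_n]]: blocks are
   nonempty, pairwise disjoint, covering) and c : {ffun 'I_n -> 'I_2}. *)

Definition colored_partition (n : nat) : Type :=
  ({set {set 'I_n}} * {ffun 'I_n -> 'I_2})%type.

Definition is_colored_partition n (s : colored_partition n) : bool :=
  partition s.1 [set: 'I_n].

Definition same_block n (s : colored_partition n) (i j : 'I_n) : bool :=
  pblock s.1 i == pblock s.1 j.

Definition color_is n (s : colored_partition n) (i : 'I_n) (k : nat) : bool :=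
  (nat_of_ord (s.2 i)).+1 == k.

Definition contains_1111 n (s : colored_partition n) : bool :=
  [exists i : 'I_n, exists j : 'I_n,
     (i < j) && same_block s i j && (s.2 i == s.2 j)].

Definition contains_1122 n (s : colored_partition n) : bool :=
  [exists i : 'I_n, exists j : 'I_n,
     [&& i < j, ~~ same_block s i j, color_is s i 1 & color_is s j 2]].

Definition contains_1221 n (s : colored_partition n) : bool :=
  [exists i : 'I_n, exists j : 'I_n,
     [&& i < j, ~~ same_block s i j, color_is s i 2 & color_is s j 1]].

Definition avoiders n : {set colored_partition n} :=
  [set s : colored_partition n | [&& is_colored_partition s,
      ~~ contains_1111 s, ~~ contains_1122 s & ~~ contains_1221 s]].

From mathcomp Require Import all_boot.
Set Implicit Arguments. Unset Strict Implicit. Unset Printing Implicit Defensive.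

(* With two colors, avoiding the three patterns means: distinct i and j share
   a block exactly when their colors differ.  So an avoider is determined by
   its coloring c, and a coloring occurs iff the relation "i = j or
   c i <> c j" is transitive.  If c i <> c j, any third point k has the color
   of one of them, say c k = c i; then k ~ j ~ i but not k ~ i.  Hence for
   n <> 2 only the two constant colorings occur, while for n = 2 all four
   colorings do. *)

Definition block_rel n (c : {ffun 'I_n -> 'I_2}) : rel 'I_n :=
  fun i j => (i == j) || (c i != c j).

Definition block_partition n (c : {ffun 'I_n -> 'I_2}) : {set {set 'I_n}} :=
  equivalence_partition (block_rel c) [set: 'I_n].

Definition consistent_coloring n (c : {ffun 'I_n -> 'I_2}) : bool :=
  [forall i, forall j, forall k,
     block_rel c i j ==> block_rel c j k ==> block_rel c i k].

(* Stated in the shape produced by unfolding [color_is]. *)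
Lemma ord2_neqE (a b : 'I_2) :
  (a != b) = (a.+1 == 1) && (b.+1 == 2) || (a.+1 == 2) && (b.+1 == 1).
Proof. by case: a b => [[|[|?]] ?] [[|[|?]] ?]. Qed.

Lemma ord2_other (a b d : 'I_2) : a != b -> (d == a) || (d == b).
Proof. by case: a b d => [[|[|?]] ?] [[|[|?]] ?] [[|[|?]] ?]. Qed.

Section BlockRelation.

Variables (n : nat) (c : {ffun 'I_n -> 'I_2}).

Lemma block_rel_refl : reflexive (block_rel c).
Proof. by move=> i; rewrite /block_rel eqxx. Qed.

Lemma block_relC : symmetric (block_rel c).
Proof. by move=> i j; rewrite /block_rel eq_sym [c i == _]eq_sym. Qed.

Lemma consistent_coloringP :
  reflect (transitive (block_rel c)) (consistent_coloring c).
Proof.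
apply: (iffP forallP) => [cc j i k | tr i].
  by move: (cc i) => /forallP/(_ j)/forallP/(_ k)/implyP/[apply]/implyP; apply.
by apply/forallP => j; apply/forallP => k; apply/implyP => ij; apply/implyP; apply: tr.
Qed.

Hypothesis c_consistent : consistent_coloring c.

Lemma block_rel_equiv : {in [set: 'I_n] & &, equivalence_rel (block_rel c)}.
Proof.
move=> i j k _ _ _; split; first exact: block_rel_refl.
have tr := consistent_coloringP c_consistent.
move=> ij; apply/idP/idP => [ik | jk]; last exact: tr jk.
by apply: tr ik; rewrite block_relC.
Qed.

Lemma block_partitionP : partition (block_partition c) [set: 'I_n].
Proof. exact: equivalence_partitionP block_rel_equiv. Qed.

Lemma same_block_partition (i j : 'I_n) :
  same_block (block_partition c, c) i j = block_rel c i j.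
Proof.
have [/eqP cover_P triv_P _] := and3P block_partitionP.
rewrite /same_block eq_pblock ?cover_P ?in_setT //=.
by rewrite (pblock_equivalence_partition block_rel_equiv) ?in_setT.
Qed.

End BlockRelation.

Lemma avoid_patternsP n (s : colored_partition n) :
  reflect (forall i j : 'I_n, i < j -> same_block s i j = (s.2 i != s.2 j))
    [&& ~~ contains_1111 s, ~~ contains_1122 s & ~~ contains_1221 s].
Proof.
rewrite /contains_1111 /contains_1122 /contains_1221 /color_is.
apply: (iffP and3P) => [[no11 no12 no21] i j lt_ij | sbE].
  apply/idP/idP => [sb | ].
    apply: contraNneq no11 => eq_c.
    by apply/existsP; exists i; apply/existsP; exists j; rewrite lt_ij sb eq_c /=.
  rewrite ord2_neqE => /orP[] /andP[ci cj]; apply: contraT => nsb.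
    by case/negP: no12; apply/existsP; exists i; apply/existsP; exists j;
       rewrite lt_ij nsb ci cj.
  by case/negP: no21; apply/existsP; exists i; apply/existsP; exists j;
     rewrite lt_ij nsb ci cj.
split; apply/existsP => -[i /existsP[j]].
- by case/andP => /andP[/sbE-> /negP].
- by case/and4P => /sbE-> /negP + ci cj; apply; rewrite ord2_neqE ci cj.
- by case/and4P => /sbE-> /negP + ci cj; apply; rewrite ord2_neqE ci cj orbT.
Qed.

Section Avoiders.

Variables (n : nat) (s : colored_partition n).
Hypothesis s_avoids : s \in avoiders n.

Lemma same_block_avoider (i j : 'I_n) : same_block s i j = block_rel s.2 i j.
Proof.
move: s_avoids; rewrite inE => /andP[_ /avoid_patternsP sbE].
have sbE_lt (k l : 'I_n) : k < l -> same_block s k l = block_rel s.2 k l.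
  by move=> lt_kl; rewrite sbE // /block_rel (ltn_eqF lt_kl : (k == l) = false).
case: (ltngtP i j) => [/sbE_lt // | /sbE_lt | /val_inj->].
  by rewrite /same_block eq_sym block_relC.
by rewrite /same_block block_rel_refl eqxx.
Qed.

Lemma avoider_consistent : consistent_coloring s.2.
Proof.
apply/consistent_coloringP => j i k.
by rewrite -!same_block_avoider /same_block => /eqP-> /eqP->.
Qed.

Lemma avoider_block_partition : s.1 = block_partition s.2.
Proof.
have part_s : partition s.1 [set: 'I_n] by move: s_avoids; rewrite inE => /andP[].
rewrite -(preim_partition_pblock part_s); apply: eq_imset => i; apply/setP => j.
by rewrite !inE; exact: same_block_avoider.
Qed.

End Avoiders.

Lemma avoidersE n :
  avoiders n = [set (block_partition c, c) | c in [set c | consistent_coloring c]].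
Proof.
apply/setP => s; apply/idP/imsetP => [s_av | [c]].
  exists s.2; first by rewrite inE avoider_consistent.
  by rewrite -avoider_block_partition // -surjective_pairing.
rewrite inE => c_cons ->; rewrite inE [is_colored_partition _]block_partitionP //=.
apply/avoid_patternsP => i j lt_ij.
by rewrite same_block_partition // /block_rel (ltn_eqF lt_ij : (i == j) = false).
Qed.

Lemma card_avoiders n :
  #|avoiders n| = #|[set c : {ffun 'I_n -> 'I_2} | consistent_coloring c]|.
Proof. by rewrite avoidersE card_imset // => c d []. Qed.

Lemma consistent_coloring2 (c : {ffun 'I_2 -> 'I_2}) : consistent_coloring c.
Proof.
apply/consistent_coloringP => j i k.
have [<- // | ne_ij] := eqVneq i j; have [<- // | ne_jk] := eqVneq j k.
move=> _ _; have /orP[/eqP-> | /eqP kj] := ord2_other k ne_ij.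
  exact: block_rel_refl.
by rewrite kj eqxx in ne_jk.
Qed.

Lemma consistent_nonconstant n (c : {ffun 'I_n -> 'I_2}) (i j : 'I_n) :
  consistent_coloring c -> c i != c j -> n = 2.
Proof.
move=> /consistent_coloringP tr cij.
have ne_ij : i != j by apply: contraNneq cij => ->.
have cover k : k \in [set i; j].
  rewrite !inE; apply/negPn/negP; rewrite negb_or => /andP[ki kj].
  have related l m : c l != c m -> block_rel c l m.
    by rewrite /block_rel => ->; rewrite orbT.
  have unrelated l : k != l -> c k = c l -> ~~ block_rel c k l.
    by move=> kl ckl; rewrite /block_rel negb_or kl ckl eqxx.
  case/orP: (ord2_other (c k) cij) => /eqP ck.
    case/negP: (unrelated i ki ck).
    by apply: (tr j); apply: related; rewrite ?ck // eq_sym.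
  case/negP: (unrelated j kj ck).
  by apply: (tr i); apply: related; rewrite ?ck // eq_sym.
rewrite -[n]card_ord -cardsT (_ : setT = [set i; j]) ?cards2 ?ne_ij //.
by apply/setP => k; rewrite in_setT cover.
Qed.

Lemma consistent_colorings n (x0 : 'I_n) : n != 2 ->
  [set c : {ffun 'I_n -> 'I_2} | consistent_coloring c] =
  [set [ffun=> a] | a : 'I_2].
Proof.
move=> n_neq2; apply/setP => c; rewrite inE.
apply/idP/imsetP => [c_cons | [a _ ->]].
  exists (c x0) => //; apply/ffunP => k; rewrite ffunE.
  by apply: contraNeq n_neq2 => /(consistent_nonconstant c_cons)->.
apply/consistent_coloringP => j i k; rewrite /block_rel !ffunE eqxx !orbF.
by move=> /eqP-> /eqP->.
Qed.

Theorem mainTheorem11 (n : nat) : 1 <= n ->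
  #|avoiders n| = (if n == 2 then 4 else 2).
Proof.
move=> n_gt0; rewrite card_avoiders; case: eqP => [-> | /eqP n_neq2].
  rewrite (_ : [set c | _] = setT) ?cardsT ?card_ffun ?card_ord //.
  by apply/setP => c; rewrite !inE consistent_coloring2.
rewrite (consistent_colorings (Ordinal n_gt0) n_neq2) card_imset ?card_ord //.
by move=> a b /ffunP/(_ (Ordinal n_gt0)); rewrite !ffunE.
Qed.
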